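(* (i) For all $\nu,\mu_0,\mu_1\in\mathsf{BW}(\mathbb R^d)$, letting $T_0$ (resp. $T_1$) be the optimal transport map from $\nu$ to $\mu_0$ (resp. $\mu_1$), $$\mathcal H(\mu_0)+\langle\nabla_{\mathsf{BW}}\mathcal H(\mu_0)\circ T_0,\,T_1-T_0\rangle_\nu\le\mathcal H(\mu_1);$$ in particular (taking $\nu=\mu_0$) $\mathcal H(\mu_0)+\langle\nabla_{\mathsf{BW}}\mathcal H(\mu_0),T-\mathrm{id}\rangle_{\mu_0}\le\mathcal H(\mu_1)$ with $T$ the optimal map from $\mu_0$ to $\mu_1$, i.e. $\mathcal H$ is geodesically convex on $\mathsf{BW}(\mathbb R^d)$. (ii) For $\eta>0$ and $\mu=\mathcal N(m,\Sigma)\in\mathsf{BW}(\mathbb R^d)$, the minimizer over $\nu\in\mathsf{BW}(\mathbb R^d)$ of $\eta\mathcal H(\nu)+\frac12W_2^2(\mu,\nu)$ is $\mathcal N(m,\Sigma_1)$ with $$\Sigma_1=\tfrac12\big(\Sigma+2\eta I+[\Sigma(\Sigma+4\eta I)]^{1/2}\big).$$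
   Context: $\mathsf{BW}(\mathbb R^d)$ is the set of Gaussian distributions $\mathcal N(m,\Sigma)$ on $\mathbb R^d$ with $\Sigma$ symmetric positive definite, endowed with the 2-Wasserstein distance $W_2$; for $\mu$ write $m_\mu,\Sigma_\mu$ for mean and covariance, $\langle f,g\rangle_\mu=\int\langle f(x),g(x)\rangle d\mu(x)$. Between two elements of $\mathsf{BW}(\mathbb R^d)$ the optimal transport map (for $W_2$) is unique and affine with symmetric PSD linear part. Entropy $\mathcal H(\mu)=\int\log\mu(x)\,d\mu(x)$ (identifying $\mu$ with its Lebesgue density), and its BW gradient is $\nabla_{\mathsf{BW}}\mathcal H(\mu)(x)=-\Sigma_\mu^{-1}(x-m_\mu)$. The matrix square root is the principal PSD root ($\Sigma$ and $\Sigma+4\eta I$ commute). *)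

From HB Require Import structures.
From mathcomp Require Import all_boot all_order all_algebra.
From mathcomp Require Import all_classical all_reals all_analysis.
Set Implicit Arguments. Unset Strict Implicit. Unset Printing Implicit Defensive.
Import Order.TTheory GRing.Theory Num.Theory.
Local Open Scope ring_scope.

Section BW.
Variable R : realType.

Definition dotv {d : nat} (u v : 'cV[R]_d) : R := (u^T *m v) 0 0.

Definition symmx {d : nat} (S : 'M[R]_d) : Prop := S^T = S.
Definition psdmx {d : nat} (S : 'M[R]_d) : Prop :=
  symmx S /\ forall v : 'cV[R]_d, 0 <= dotv v (S *m v).
Definition spdmx {d : nat} (S : 'M[R]_d) : Prop :=
  symmx S /\ forall v : 'cV[R]_d, v != 0 -> 0 < dotv v (S *m v).

Definition psd_sqrt {d : nat} (A : 'M[R]_d) : 'M[R]_d :=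
  xget 0 [set S : 'M[R]_d | psdmx S /\ S *m S = A].

(* A Gaussian N(m, Sigma) on R^d is represented by its parameters (m, Sigma). *)
Definition gauss (d : nat) : Type := ('cV[R]_d * 'M[R]_d)%type.
Definition gmean {d : nat} (mu : gauss d) : 'cV[R]_d := mu.1.
Definition gcov {d : nat} (mu : gauss d) : 'M[R]_d := mu.2.
Definition inBW {d : nat} (mu : gauss d) : Prop := spdmx (gcov mu).

Definition affmap (d : nat) : Type := ('M[R]_d * 'cV[R]_d)%type.
Definition aff_app {d : nat} (f : affmap d) (x : 'cV[R]_d) : 'cV[R]_d :=
  f.1 *m x + f.2.
Definition aff_id (d : nat) : affmap d := (1%:M, 0).
Definition aff_comp {d : nat} (f g : affmap d) : affmap d :=
  (f.1 *m g.1, f.1 *m g.2 + f.2).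
Definition aff_sub {d : nat} (f g : affmap d) : affmap d :=
  (f.1 - g.1, f.2 - g.2).

(* <f, g>_nu = int <f(x), g(x)> dnu(x) for affine f, g and nu = N(m, Sigma):
   since f(x) = f(m) + F (x - m), this equals
   <f(m), g(m)> + E[(x-m)^T F^T G (x-m)] = <f(m), g(m)> + tr(F^T G Sigma). *)
Definition gauss_inner {d : nat} (nu : gauss d) (f g : affmap d) : R :=
  dotv (aff_app f (gmean nu)) (aff_app g (gmean nu))
  + \tr (f.1^T *m g.1 *m gcov nu).

(* Optimal transport map from nu to mu between elements of BW(R^d): the
   (unique) affine map with symmetric PSD linear part pushing nu forward to mu;
   the pushforward of N(m, S) by x |-> A x + b is N(A m + b, A S A^T). *)
Definition is_ot_map {d : nat} (nu mu : gauss d) (T : affmap d) : Prop :=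
  psdmx T.1 /\ T.1 *m gcov nu *m T.1^T = gcov mu
  /\ aff_app T (gmean nu) = gmean mu.
Definition ot_map {d : nat} (nu mu : gauss d) : affmap d :=
  xget (aff_id d) [set T | is_ot_map nu mu T].

(* W_2^2(mu, nu) = int |T(x) - x|^2 dmu(x), T the optimal map from mu to nu. *)
Definition W2sq {d : nat} (mu nu : gauss d) : R :=
  let D := aff_sub (ot_map mu nu) (aff_id d) in gauss_inner mu D D.

(* Entropy H(mu) = int log mu dmu of N(m, Sigma) on R^d
   (= - (1/2) log det (2 pi e Sigma)). *)
Definition entropy {d : nat} (mu : gauss d) : R :=
  - (d%:R / 2) * (ln (2 * pi) + 1) - (1 / 2) * ln (\det (gcov mu)).

Definition gradH {d : nat} (mu : gauss d) : affmap d :=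
  (- invmx (gcov mu), invmx (gcov mu) *m gmean mu).

End BW.

From HB Require Import structures.
From mathcomp Require Import all_boot all_order all_algebra.
From mathcomp Require Import all_classical all_reals all_analysis.
From mathcomp Require Import complex lra.
Import Order.TTheory GRing.Theory Num.Theory.
Local Open Scope ring_scope.
Set Implicit Arguments. Unset Strict Implicit. Unset Printing Implicit Defensive.

(* Everything reduces to linear algebra on covariance matrices. Up to a
   constant, the entropy of N(m, S) is -(1/2) ln det S, and the optimal map from
   N(m, S) to N(m', S') is affine with linear part the unique PSD solution B of
   B S B = S'. In (i) the gradient term equals d - tr (B0^-1 B1), so the claim
   is the tangent inequality of the concave function ln det,
     ln det B1 - ln det B0 <= tr (B0^-1 B1) - d,
   which follows by congruence from ln det N <= tr N - d, that is, from
   ln x <= x - 1 on the eigenvalues of N. In (ii), A := (I + S^-1 P) / 2 with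
   P := [S (S + 4 eta I)]^(1/2) is the optimal linear part from S to S1 and
   satisfies the first-order condition (A - I) S A = eta I; expanding the
   objective around N(m, S1), the same tangent inequality leaves the excess
   1/2 |m' - m|^2 + 1/2 tr ((B - A) S (B - A)) >= 0, which vanishes only at
   N(m, S1). Square roots and diagonalisations of real symmetric matrices come
   from the complex spectral theorem; square roots are polynomials in the
   matrix, hence commute with everything that commutes with it. *)

(* The complexification of [A] is hermitian, hence unitarily diagonalisable
   with a real spectrum. *)
Lemma sym_split_annihilator (R : rcfType) n (A : 'M[R]_n.+1) : A^T = A ->
  exists2 rs : seq R, uniq rs & horner_mx A (\prod_(r <- rs) ('X - r%:P)) = 0.
Proof.
move=> symA; pose f := real_complex R; pose AC := map_mx f A.
have hermAC : AC \is hermsymmx.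
  apply: realsym_hermsym.
    rewrite qualifE /AC expr0 scale1r; apply/eqP/matrixP => i j.
    by rewrite !mxE /= -[A in RHS]symA mxE.
  by apply/mxOverP => i j; rewrite /AC mxE; apply/complex_realP; exists (A i j).
have /orthomx_spectralP eAC := hermitian_normalmx hermAC.
have spR := hermitian_spectral_diag_real hermAC.
set P := spectralmx AC in eAC; set sp := spectral_diag AC in eAC spR.
pose cs := undup [seq sp 0 i | i <- enum 'I_n.+1].
have csR c : c \in cs -> c \is Num.real.
  by rewrite mem_undup => /mapP [i _ ->]; move/mxOverP: spR => /(_ 0 i).
exists [seq complex.Re c | c <- cs].
  rewrite map_inj_in_uniq ?undup_uniq // => x y xR yR eq.
  by rewrite -(RRe_real (csR _ xR)) -(RRe_real (csR _ yR)) eq.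
apply/eqP; rewrite -(map_mx_eq0 f) map_horner_mx rmorph_prod /=.
rewrite (eq_bigr (fun r => 'X - (f r)%:P)); last first.
  by move=> r _; rewrite map_polyXsubC.
rewrite big_map (eq_big_seq (fun c => 'X - c%:P)); last first.
  by move=> c /csR cR; rewrite /f RRe_real.
rewrite -/AC eAC horner_mx_uconjC ?spectral_unit // horner_mx_diag.
suff -> : diag_mx (map_mx (horner (\prod_(c <- cs) ('X - c%:P))) sp) = 0.
  by rewrite mulmx0 mul0mx.
apply/matrixP => k l; rewrite !mxE; case: (k == l); last by rewrite mulr0n.
rewrite mulr1n; apply/eqP; rewrite -/(root _ _) root_prod_XsubC mem_undup.
by apply/mapP; exists k; rewrite ?mem_enum.
Qed.

Section PSD.
Variable R : realType.
Implicit Types n : nat.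

Lemma dotvE n (u v : 'cV[R]_n) : dotv u v = \sum_i u i 0 * v i 0.
Proof. by rewrite /dotv mxE; apply: eq_bigr => i _; rewrite mxE. Qed.

Lemma dotvC n (u v : 'cV[R]_n) : dotv u v = dotv v u.
Proof. by rewrite !dotvE; apply: eq_bigr => i _; rewrite mulrC. Qed.

Lemma dotv_ge0 n (u : 'cV[R]_n) : 0 <= dotv u u.
Proof. by rewrite dotvE; apply: sumr_ge0 => i _; rewrite -expr2 sqr_ge0. Qed.

Lemma dotv_eq0 n (u : 'cV[R]_n) : (dotv u u == 0) = (u == 0).
Proof.
apply/idP/eqP => [|->]; last by rewrite dotvE big1 // => i _; rewrite mxE mul0r.
rewrite dotvE psumr_eq0 => [/allP u0|i _]; last by rewrite -expr2 sqr_ge0.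
apply/matrixP => i j; rewrite ord1 mxE.
by have /(_ (mem_index_enum i)) := u0 i; rewrite -expr2 sqrf_eq0 => /eqP.
Qed.

Lemma dotv_gt0 n (u : 'cV[R]_n) : u != 0 -> 0 < dotv u u.
Proof. by rewrite lt_def dotv_ge0 dotv_eq0 => ->. Qed.

Lemma dotv_mulmx n (u w : 'cV[R]_n) (M : 'M[R]_n) :
  dotv u (M *m w) = dotv (M^T *m u) w.
Proof. by rewrite /dotv trmx_mul trmxK mulmxA. Qed.

Lemma dotvDr n (u v w : 'cV[R]_n) : dotv u (v + w) = dotv u v + dotv u w.
Proof. by rewrite /dotv mulmxDr mxE. Qed.

Lemma dotvZr n (u v : 'cV[R]_n) a : dotv u (a *: v) = a * dotv u v.
Proof. by rewrite /dotv -scalemxAr mxE. Qed.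

Lemma dotv0l n (v : 'cV[R]_n) : dotv 0 v = 0.
Proof. by rewrite /dotv trmx0 mul0mx mxE. Qed.

Lemma psdmx_sym n (S : 'M[R]_n) : psdmx S -> S^T = S. Proof. by case. Qed.

Lemma spdmx_psd n (S : 'M[R]_n) : spdmx S -> psdmx S.
Proof.
case=> symS posS; split => // v; have [->|/posS/ltW //] := eqVneq v 0.
by rewrite mulmx0 dotvC dotv0l.
Qed.

Lemma spdmx_unit n (S : 'M[R]_n) : spdmx S -> S \in unitmx.
Proof.
case=> symS posS; rewrite -row_free_unit -kermx_eq0; apply/rowV0P => v.
move=> /sub_kermxP/(congr1 trmx); rewrite trmx_mul symS trmx0 => Sv0.
apply: trmx_inj; rewrite trmx0; apply/eqP; apply: contraT => /posS.
by rewrite Sv0 dotvC dotv0l ltxx.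
Qed.

Lemma psdmx_inv n (S : 'M[R]_n) : psdmx S -> S \in unitmx -> psdmx (invmx S).
Proof.
case=> symS posS unitS; split; first by rewrite /symmx trmx_inv symS.
by move=> v; rewrite -{1}(mulKVmx unitS v) dotvC; apply: posS.
Qed.

Lemma psdmx_congr n (S K : 'M[R]_n) : psdmx S -> K^T = K -> psdmx (K *m S *m K).
Proof.
case=> symS posS symK; split; first by rewrite /symmx !trmx_mul symK symS mulmxA.
by move=> v; rewrite -!mulmxA dotv_mulmx symK posS.
Qed.

Lemma psdmxD n (A B : 'M[R]_n) : psdmx A -> psdmx B -> psdmx (A + B).
Proof.
case=> symA posA [symB posB]; split; first by rewrite /symmx linearD /= symA symB.
by move=> v; rewrite mulmxDl dotvDr addr_ge0.
Qed.

Lemma spdmxDl n (A B : 'M[R]_n) : spdmx A -> psdmx B -> spdmx (A + B).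
Proof.
move=> spdA psdB; have [symAB _] := psdmxD (spdmx_psd spdA) psdB.
split=> // v v_nz; rewrite mulmxDl dotvDr.
by have := spdA.2 v v_nz; have := psdB.2 v; lra.
Qed.

Lemma psdmx_scalar n (c : R) : 0 <= c -> psdmx (c%:M : 'M[R]_n).
Proof.
move=> c_ge0; split; first by rewrite /symmx tr_scalar_mx.
by move=> v; rewrite mul_scalar_mx dotvZr mulr_ge0 ?dotv_ge0.
Qed.

Lemma psdmxZ n (c : R) (A : 'M[R]_n) : 0 <= c -> psdmx A -> psdmx (c *: A).
Proof.
move=> c_ge0 [symA posA]; split; first by rewrite /symmx linearZ /= symA.
by move=> v; rewrite -scalemxAl dotvZr mulr_ge0.
Qed.

Lemma spdmxZ n (c : R) (A : 'M[R]_n) : 0 < c -> spdmx A -> spdmx (c *: A).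
Proof.
move=> c_gt0 [symA posA]; split; first by rewrite /symmx linearZ /= symA.
by move=> v v_nz; rewrite -scalemxAl dotvZr mulr_gt0 ?posA.
Qed.

End PSD.

Section Spectral.
Variable R : realType.
Implicit Types n : nat.

Lemma poly_interp (rs : seq R) (f : R -> R) : uniq rs ->
  exists s : {poly R}, {in rs, forall r, s.[r] = f r}.
Proof.
elim: rs => [|a rs IH] /=; first by exists 0.
case/andP => a_rs /IH [s sE]; pose q := \prod_(r <- rs) ('X - r%:P).
have qa : q.[a] != 0 by rewrite -/(root _ _) root_prod_XsubC.
exists (s + ((f a - s.[a]) / q.[a]) *: q) => r; rewrite inE => /predU1P[->|r_rs].
  by rewrite hornerD hornerZ divfK // addrC subrK.
have /eqP qr : root q r by rewrite root_prod_XsubC.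
by rewrite hornerD hornerZ qr mulr0 addr0 sE.
Qed.

Lemma horner_mx_eigen n (A : 'M[R]_n.+1) (v : 'rV_n.+1) a p :
  v *m A = a *: v -> v *m horner_mx A p = p.[a] *: v.
Proof.
move=> vA; elim/poly_ind: p => [|p c IH].
  by rewrite rmorph0 mulmx0 horner0 scale0r.
rewrite rmorphD rmorphM /= horner_mx_X horner_mx_C hornerMXaddC mulmxDr.
rewrite mul_mx_scalar -[_ * A]/(_ *m A) mulmxA IH -scalemxAl vA.
by rewrite scalerA scalerDl.
Qed.

Lemma psd_eigenvalue_ge0 n (A : 'M[R]_n) a : psdmx A -> eigenvalue A a -> 0 <= a.
Proof.
case=> symA posA /eigenvalueP [v vA v_nz].
have vT_nz : v^T != 0 by rewrite -(inj_eq trmx_inj) trmxK trmx0.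
have := posA v^T; rewrite -symA -trmx_mul vA linearZ dotvZr.
by rewrite (pmulr_lge0 _ (dotv_gt0 vT_nz)).
Qed.

(* The factors [A - r] at non-eigenvalues [r] are invertible, so they can
   be dropped from an annihilating product. *)
Lemma sym_eigen_annihilator n (A : 'M[R]_n.+1) : A^T = A ->
  exists rs : seq R, [/\ uniq rs, rs =i eigenvalue A &
    horner_mx A (\prod_(r <- rs) ('X - r%:P)) = 0].
Proof.
move=> /sym_split_annihilator [rs0 rs0_uniq A_rs0].
pose rs := [seq r <- rs0 | eigenvalue A r].
have A_rs : horner_mx A (\prod_(r <- rs) ('X - r%:P)) = 0.
  move: A_rs0; rewrite (bigID (eigenvalue A)) /= -big_filter rmorphM /=.
  set X := horner_mx A _; set Y := horner_mx A _ => XY0.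
  suff Y_unit : Y \in unitmx by rewrite -[X](mulmxK Y_unit) [X *m Y]XY0 mul0mx.
  rewrite /Y rmorph_prod; elim: rs0 {rs0_uniq XY0 rs X Y} => [|r t IH].
    by rewrite big_nil unitmx1.
  rewrite big_cons; case: ifP => // r_not_eigen.
  rewrite -[_ * _]/(_ *m _) unitmx_mul IH andbT rmorphB /=.
  rewrite horner_mx_X horner_mx_C.
  by move: r_not_eigen; rewrite -row_free_unit -kermx_eq0 negbK.
exists rs; split => //; first exact: filter_uniq.
move=> a; rewrite mem_filter; apply/andP/idP => [[] //| a_eigen]; split=> //.
have /eigenvalueP [v vA v_nz] := a_eigen.
have := horner_mx_eigen (\prod_(r <- rs0) ('X - r%:P)) vA.
rewrite A_rs0 mulmx0 => /esym/eqP; rewrite scaler_eq0 (negPf v_nz) orbF.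
by rewrite -/(root _ _) root_prod_XsubC.
Qed.

Lemma horner_mx_eigen_eq n (A : 'M[R]_n.+1) (p q : {poly R}) : A^T = A ->
  {in eigenvalue A, forall r, p.[r] = q.[r]} -> horner_mx A p = horner_mx A q.
Proof.
move=> /sym_eigen_annihilator [rs [rs_uniq rsE A_rs]] pq; apply/eqP.
rewrite -subr_eq0 -rmorphB; apply/eqP.
have /dvdpP [k ->] : \prod_(r <- rs) ('X - r%:P) %| p - q.
  apply: uniq_roots_dvdp; last by rewrite uniq_rootsE.
  by apply/allP => r; rewrite rsE => /pq pqr; rewrite rootE !hornerE pqr subrr.
by rewrite rmorphM /= A_rs mulr0.
Qed.

Lemma sym_eigen_interp n (A : 'M[R]_n.+1) (f : R -> R) : A^T = A ->
  exists s : {poly R}, {in eigenvalue A, forall r, s.[r] = f r}.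
Proof.
move=> /sym_eigen_annihilator [rs [rs_uniq rsE _]].
by have [s sE] := poly_interp f rs_uniq; exists s => r; rewrite -rsE => /sE.
Qed.

Lemma trmx_horner n (A : 'M[R]_n.+1) p : (horner_mx A p)^T = horner_mx A^T p.
Proof.
elim/poly_ind: p => [|p c IH]; first by rewrite !rmorph0 trmx0.
rewrite !rmorphD !rmorphM /= !horner_mx_X !horner_mx_C.
rewrite -[_ * A]/(_ *m A) -[_ * A^T]/(_ *m A^T) linearD /= tr_scalar_mx.
by rewrite trmx_mul IH; congr (_ + _); apply/esym/comm_horner_mx.
Qed.

Lemma horner_mx_comp n (A : 'M[R]_n.+1) p q :
  horner_mx A (p \Po q) = horner_mx (horner_mx A q) p.
Proof.
elim/poly_ind: p => [|p c IH]; first by rewrite comp_poly0 !rmorph0.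
rewrite comp_polyD comp_polyM comp_polyX comp_polyC !rmorphD !rmorphM /= IH.
by rewrite !horner_mx_C horner_mx_X.
Qed.

(* With [s] interpolating [r |-> r^(1/4)] on the spectrum, [S := s(H)] is
   symmetric, so [S *m S] is a PSD square root of [H]; a PSD root [Q] has
   spectrum [sqrt] of that of [H], hence [Q = (s(Q^2))^2 = S *m S]. *)
Lemma psd_poly_sqrt n (H : 'M[R]_n.+1) : psdmx H -> exists p : {poly R},
  [/\ psdmx (horner_mx H p), horner_mx H p *m horner_mx H p = H &
      forall Q, psdmx Q -> Q *m Q = H -> Q = horner_mx H p].
Proof.
move=> psdH; have symH := psdmx_sym psdH.
pose root4 (r : R) := Num.sqrt (Num.sqrt r).
have root4K r : 0 <= r -> root4 r * root4 r * (root4 r * root4 r) = r.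
  have sqrtK x : 0 <= x -> Num.sqrt x * Num.sqrt x = x.
    by move=> x0; rewrite -expr2 sqr_sqrtr.
  by move=> r0; rewrite /root4 sqrtK ?sqrtr_ge0 // sqrtK.
have [s sE] := sym_eigen_interp root4 symH.
set S := horner_mx H s; have symS : S^T = S by rewrite trmx_horner symH.
have SS : horner_mx H (s * s) = S *m S by rewrite rmorphM.
exists (s * s); rewrite SS; split.
- split; first by rewrite /symmx trmx_mul symS.
  by move=> v; rewrite -mulmxA dotv_mulmx symS dotv_ge0.
- rewrite -SS -[_ *m _]/(_ * _) -rmorphM -[RHS]horner_mx_X.
  apply: horner_mx_eigen_eq => // r rH.
  by rewrite hornerX !hornerM sE // root4K // (psd_eigenvalue_ge0 psdH).
- move=> Q psdQ QQ; have symQ := psdmx_sym psdQ.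
  have QQE : Q *m Q = horner_mx Q ('X * 'X) by rewrite rmorphM /= horner_mx_X.
  rewrite -SS -QQ QQE -horner_mx_comp -{1}[Q]horner_mx_X.
  apply: horner_mx_eigen_eq => // t tQ; have t0 := psd_eigenvalue_ge0 psdQ tQ.
  have ttH : eigenvalue H (t * t).
    have /eigenvalueP [v vQ v_nz] := tQ; apply/eigenvalueP; exists v => //.
    by rewrite -QQ mulmxA vQ -scalemxAl vQ scalerA.
  rewrite hornerX horner_comp !hornerE sE // /root4 -expr2 sqrtr_sqr.
  by rewrite sqr_sqrtr ger0_norm.
Qed.

End Spectral.

Section SqrtLogDet.
Variable R : realType.
Implicit Types n : nat.

Lemma psd_sqrt_spec n (H : 'M[R]_n) : psdmx H ->
  [/\ psdmx (psd_sqrt H), psd_sqrt H *m psd_sqrt H = H &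
      forall Q, psdmx Q -> Q *m Q = H -> Q = psd_sqrt H].
Proof.
case: n H => [|n] H psdH.
  have mx0_eq (A B : 'M[R]_0) : A = B by rewrite [A]flatmx0 [B]flatmx0.
  have [] := xgetPex 0 (ex_intro (fun S : 'M[R]_0 => psdmx S /\ S *m S = H) H
                                 (conj psdH (mx0_eq _ _))).
  by split=> // Q _ _; apply: mx0_eq.
have [p [psd_p pp p_uniq]] := psd_poly_sqrt psdH.
suff -> : psd_sqrt H = horner_mx H p by [].
by apply: xget_unique => // Q [psdQ /(p_uniq _ psdQ)].
Qed.

Lemma psd_sqrt_comm n (A H : 'M[R]_n) : psdmx H ->
  A *m H = H *m A -> A *m psd_sqrt H = psd_sqrt H *m A.
Proof.
case: n A H => [|n] A H psdH AH; first by rewrite [LHS]flatmx0 [RHS]flatmx0.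
have [p [psd_p pp _]] := psd_poly_sqrt psdH.
have [_ _ sqrt_uniq] := psd_sqrt_spec psdH.
by rewrite -(sqrt_uniq _ psd_p pp); apply: comm_mx_horner.
Qed.

Lemma psdmx_mul_comm n (A B : 'M[R]_n) : psdmx A -> psdmx B ->
  A *m B = B *m A -> psdmx (A *m B).
Proof.
move=> psdA psdB AB; have [psdK KK _] := psd_sqrt_spec psdA.
have KB := psd_sqrt_comm psdA (esym AB).
by rewrite -KK -mulmxA -KB mulmxA; apply: psdmx_congr (psdmx_sym psdK).
Qed.

Lemma psd_eigen_diag n (N : 'M[R]_n.+1) : psdmx N -> exists D : 'rV[R]_n.+1,
  [/\ forall i, 0 <= D 0 i, \det N = \prod_i D 0 i & \tr N = \sum_i D 0 i].
Proof.
move=> psdN; have [rs [rs_uniq _ N_rs]] := sym_eigen_annihilator (psdmx_sym psdN).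
have [P P_unit /diagonalizable_forPex [D /(simmxP P_unit) PN]] :
    diagonalizable N.
  by apply/diagonalizableP; exists rs => //; apply: mxminpoly_min.
have PNP : P *m N *m invmx P = diag_mx D by rewrite PN mulmxK.
exists D; split.
- move=> i; apply: (psd_eigenvalue_ge0 psdN); apply/eigenvalueP.
  exists (row i P).
    by rewrite -row_mul PN row_mul row_diag_mx -scalemxAl -rowE.
  apply/eqP => /(congr1 (mulmx^~ (invmx P))).
  rewrite -row_mul mulmxV // row1 mul0mx => /rowP/(_ i).
  by rewrite !mxE !eqxx /= => /eqP; rewrite oner_eq0.
- rewrite -det_diag -PNP !det_mulmx det_inv mulrC mulrA mulVf ?mul1r //.
  by rewrite -unitfE -unitmxE.
- by rewrite -mxtrace_diag -PNP mxtrace_mulC mulmxA mulVmx ?mul1mx.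
Qed.

Lemma psd_det_gt0 n (N : 'M[R]_n) : psdmx N -> N \in unitmx -> 0 < \det N.
Proof.
case: n N => [|n] N psdN N_unit; first by rewrite det_mx00 ltr01.
have [D [D_ge0 detN _]] := psd_eigen_diag psdN.
rewrite lt_def -unitfE -unitmxE N_unit detN; exact: prodr_ge0.
Qed.

Lemma ln_le_subr1 (x : R) : 0 < x -> ln x <= x - 1.
Proof.
move=> x_gt0; have := @le_ln1Dx R (x - 1).
by rewrite addrCA subrr addr0; apply; lra.
Qed.

Lemma ln_prod (I : Type) (r : seq I) (F : I -> R) : (forall i, 0 < F i) ->
  ln (\prod_(i <- r) F i) = \sum_(i <- r) ln (F i).
Proof.
move=> F_gt0; elim: r => [|i r IH]; first by rewrite !big_nil ln1.
by rewrite !big_cons lnM ?posrE ?IH // prodr_gt0.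
Qed.

Lemma ln_det_le_tr n (N : 'M[R]_n) : psdmx N -> N \in unitmx ->
  ln (\det N) <= \tr N - n%:R.
Proof.
case: n N => [|n] N psdN N_unit.
  by rewrite det_mx00 ln1 /mxtrace big_ord0 subrr.
have [D [D_ge0 detN trN]] := psd_eigen_diag psdN.
have D_gt0 i : 0 < D 0 i.
  rewrite lt_def D_ge0 andbT; apply: contraTneq (psd_det_gt0 psdN N_unit) => Di0.
  by rewrite detN (bigD1 i) //= Di0 mul0r ltxx.
have -> : n.+1%:R = \sum_(i < n.+1) (1 : R) by rewrite sumr_const card_ord.
rewrite detN trN ln_prod // -sumrB.
by apply: ler_sum => i _; apply: ln_le_subr1.
Qed.

(* Apply [ln_det_le_tr] to the congruence [K Y K] with [K := X^(-1/2)]. *)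
Lemma ln_det_tangent n (X Y : 'M[R]_n) : psdmx X -> X \in unitmx ->
  psdmx Y -> Y \in unitmx ->
  ln (\det Y) - ln (\det X) <= \tr (invmx X *m Y) - n%:R.
Proof.
move=> psdX X_unit psdY Y_unit.
have [psdK KK _] := psd_sqrt_spec (psdmx_inv psdX X_unit).
set K := psd_sqrt _ in psdK KK; have symK := psdmx_sym psdK.
have K_unit : K \in unitmx.
  by move: (unitmx_inv X); rewrite X_unit -KK unitmx_mul => /andP[].
have N_unit : K *m Y *m K \in unitmx by rewrite !unitmx_mul K_unit Y_unit.
have := ln_det_le_tr (psdmx_congr psdY symK) N_unit.
rewrite mxtrace_mulC mulmxA KK !det_mulmx mulrAC -det_mulmx KK det_inv.
have detX := psd_det_gt0 psdX X_unit; have detY := psd_det_gt0 psdY Y_unit.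
by rewrite lnM ?posrE ?invr_gt0 // lnV ?posrE // addrC.
Qed.

Lemma ln_det_congr n (B S : 'M[R]_n) : psdmx B -> B \in unitmx ->
  psdmx S -> S \in unitmx ->
  ln (\det (B *m S *m B)) = 2 * ln (\det B) + ln (\det S).
Proof.
move=> psdB B_unit psdS S_unit.
have detB := psd_det_gt0 psdB B_unit; have detS := psd_det_gt0 psdS S_unit.
rewrite !det_mulmx !lnM ?posrE ?mulr_gt0 //; lra.
Qed.

End SqrtLogDet.

Section Gaussians.
Variable R : realType.
Implicit Types n : nat.

(* The solution is [K^-1 (K S' K)^(1/2) K^-1] with [K := S^(1/2)]. *)
Lemma riccati_psd_ex_unique n (S S' : 'M[R]_n) : spdmx S -> psdmx S' ->
  exists B, [/\ psdmx B, B *m S *m B = S' &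
    forall B', psdmx B' -> B' *m S *m B' = S' -> B' = B].
Proof.
move=> spdS psdS'; have S_unit := spdmx_unit spdS.
have [psdK KK _] := psd_sqrt_spec (spdmx_psd spdS).
set K := psd_sqrt S in psdK KK; have symK := psdmx_sym psdK.
have K_unit : K \in unitmx by move: S_unit; rewrite -KK unitmx_mul => /andP[].
have symKi : (invmx K)^T = invmx K by rewrite trmx_inv symK.
have [psdQ QQ Q_uniq] := psd_sqrt_spec (psdmx_congr psdS' symK).
set Q := psd_sqrt _ in psdQ QQ Q_uniq.
exists (invmx K *m Q *m invmx K); split; first exact: psdmx_congr.
  rewrite -KK !mulmxA mulmxKV // mulmxK // -(mulmxA _ Q Q) QQ !mulmxA.
  by rewrite mulVmx // mul1mx mulmxK.
move=> B psdB BSB.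
have KBK2 : K *m B *m K *m (K *m B *m K) = K *m S' *m K.
  by rewrite -BSB -KK !mulmxA.
rewrite -(Q_uniq _ (psdmx_congr psdB symK) KBK2) !mulmxA mulVmx // mul1mx.
by rewrite mulmxK.
Qed.

Lemma is_ot_mapP n (nu mu : gauss R n) (T : affmap R n) : is_ot_map nu mu T <->
  [/\ psdmx T.1, T.1 *m gcov nu *m T.1 = gcov mu &
      aff_app T (gmean nu) = gmean mu].
Proof.
split=> [[psdT [TT Tm]] | [psdT TT Tm]].
  by rewrite (psdmx_sym psdT) in TT.
by split=> //; rewrite (psdmx_sym psdT).
Qed.

Lemma is_ot_map_unique n (nu mu : gauss R n) (T T' : affmap R n) : inBW nu ->
  is_ot_map nu mu T -> is_ot_map nu mu T' -> T = T'.
Proof.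
case: T T' => [A a] [A' a'] nu_BW.
move=> /is_ot_mapP [/= psdA AA Am] /is_ot_mapP [/= psdA' AA' Am'].
have psdAA := psdmx_congr (spdmx_psd nu_BW) (psdmx_sym psdA).
have [B [_ _ B_uniq]] := riccati_psd_ex_unique nu_BW psdAA.
move: AA'; rewrite -AA => /(B_uniq _ psdA') eA'; have eA := B_uniq _ psdA erefl.
by move: Am'; rewrite -{}Am /aff_app /= eA eA' => /addrI ->.
Qed.

Lemma ot_mapP n (nu mu : gauss R n) : inBW nu -> inBW mu ->
  is_ot_map nu mu (ot_map nu mu).
Proof.
move=> nu_BW mu_BW.
have [B [psdB BB _]] := riccati_psd_ex_unique nu_BW (spdmx_psd mu_BW).
rewrite /ot_map; apply: xgetPex; exists (B, gmean mu - B *m gmean nu).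
by apply/is_ot_mapP; split=> //; rewrite /aff_app addrC subrK.
Qed.

Lemma ot_map_linear_unique n (nu mu : gauss R n) (B : 'M[R]_n) :
  inBW nu -> inBW mu -> psdmx B -> B *m gcov nu *m B = gcov mu ->
  B = (ot_map nu mu).1.
Proof.
move=> nu_BW mu_BW psdB BB.
suff -> : ot_map nu mu = (B, gmean mu - B *m gmean nu) by [].
apply: is_ot_map_unique nu_BW (ot_mapP nu_BW mu_BW) _.
by apply/is_ot_mapP; split=> //; rewrite /aff_app addrC subrK.
Qed.

Lemma ot_map_unit n (nu mu : gauss R n) (T : affmap R n) : inBW mu ->
  is_ot_map nu mu T -> T.1 \in unitmx.
Proof.
move=> /spdmx_unit mu_unit /is_ot_mapP [_ TT _].
by move: mu_unit; rewrite -TT !unitmx_mul => /andP[/andP[]].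
Qed.

Lemma is_ot_map_id n (mu : gauss R n) : is_ot_map mu mu (aff_id R n).
Proof.
apply/is_ot_mapP; split; first exact: psdmx_scalar.
  by rewrite mul1mx mulmx1.
by rewrite /aff_app mul1mx addr0.
Qed.

Lemma aff_compf1 n (f : affmap R n) : aff_comp f (aff_id R n) = f.
Proof. by case: f => F a; rewrite /aff_comp /= mulmx1 mulmx0 add0r. Qed.

Lemma W2sqE n (mu nu : gauss R n) : inBW mu -> inBW nu ->
  W2sq mu nu = dotv (gmean nu - gmean mu) (gmean nu - gmean mu)
    + \tr (((ot_map mu nu).1 - 1%:M) *m ((ot_map mu nu).1 - 1%:M) *m gcov mu).
Proof.
move=> mu_BW nu_BW; have /is_ot_mapP [psdT _ Tm] := ot_mapP mu_BW nu_BW.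
have Tm' : aff_app (aff_sub (ot_map mu nu) (aff_id R n)) (gmean mu)
           = gmean nu - gmean mu.
  by rewrite -Tm /aff_app /= mulmxBl mul1mx subr0 addrAC.
rewrite /W2sq /gauss_inner Tm' /= [(_ - 1%:M)^T]linearB /=.
by rewrite (psdmx_sym psdT) trmx1.
Qed.



Lemma mxtrace_congrE n (Y S : 'M[R]_n) : Y^T = Y ->
  \tr (Y *m S *m Y) = \sum_j dotv (col j Y) (S *m col j Y).
Proof.
move=> symY; rewrite /mxtrace; apply: eq_bigr => j _; rewrite -mulmxA dotvE mxE.
apply: eq_bigr => k _; rewrite !mxE; congr (_ * _).
  by rewrite -[in LHS]symY mxE.
by apply: eq_bigr => l _; rewrite !mxE.
Qed.

Lemma mxtrace_congr_ge0 n (Y S : 'M[R]_n) : psdmx S -> Y^T = Y ->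
  0 <= \tr (Y *m S *m Y).
Proof.
by case=> _ posS symY; rewrite mxtrace_congrE //; apply: sumr_ge0 => j _.
Qed.

Lemma mxtrace_congr_eq0 n (Y S : 'M[R]_n) : spdmx S -> Y^T = Y ->
  \tr (Y *m S *m Y) = 0 -> Y = 0.
Proof.
move=> spdS symY; rewrite mxtrace_congrE // => /eqP.
rewrite psumr_eq0 => [/allP Y0|j _]; last exact: (spdmx_psd spdS).2.
apply/matrixP => i j; rewrite mxE.
suff /matrixP/(_ i 0) : col j Y = 0 by rewrite !mxE.
apply/eqP; apply: contraT => /spdS.2; have /(_ (mem_index_enum j)) := Y0 j.
by move=> /eqP ->; rewrite ltxx.
Qed.

Lemma mxtrace_sqrD_congr n (X Y S : 'M[R]_n) : X^T = X -> Y^T = Y -> S^T = S ->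
  \tr ((X + Y) *m (X + Y) *m S)
  = \tr (X *m X *m S) + \tr (Y *m S *m Y) + 2 * \tr (X *m S *m Y).
Proof.
move=> symX symY symS.
have tYY : \tr (Y *m Y *m S) = \tr (Y *m S *m Y) by rewrite -mulmxA mxtrace_mulC.
have tYX : \tr (Y *m X *m S) = \tr (X *m S *m Y) by rewrite -mulmxA mxtrace_mulC.
have tXY : \tr (X *m Y *m S) = \tr (X *m S *m Y).
  by rewrite -mxtrace_tr !trmx_mul symX symY symS -mulmxA mxtrace_mulC mulmxA.
rewrite mulmxDl !mulmxDr !mulmxDl !raddfD /= tYY tYX tXY; lra.
Qed.


Lemma gauss_inner_gradH_ot n (nu mu : gauss R n) (T S : affmap R n) :
  inBW nu -> inBW mu -> is_ot_map nu mu T ->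
  gauss_inner nu (aff_comp (gradH mu) T) (aff_sub S T)
  = n%:R - \tr (invmx T.1 *m S.1).
Proof.
move=> nu_BW mu_BW otT; have T_unit := ot_map_unit mu_BW otT.
have /is_ot_mapP [psdT TT Tm] := otT.
have mu_unit := spdmx_unit mu_BW; have nu_unit := spdmx_unit nu_BW.
have grad_mean : aff_app (aff_comp (gradH mu) T) (gmean nu) = 0.
  rewrite /aff_comp /gradH /= -Tm /aff_app /=.
  by rewrite mulmxDr !mulNmx mulmxA addrCA addKr addNr.
have grad_lin : (aff_comp (gradH mu) T).1^T = - (invmx (gcov nu) *m invmx T.1).
  rewrite /= mulNmx linearN /= trmx_mul (psdmx_sym psdT) trmx_inv.
  rewrite (psdmx_sym (spdmx_psd mu_BW)); congr (- _).
  by rewrite -[RHS](mulmxK mu_unit) -{2}TT !mulmxA mulmxKV // mulVmx // mul1mx.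
rewrite /gauss_inner grad_mean dotv0l add0r grad_lin /= !mulNmx raddfN /=.
rewrite -mulmxA mxtrace_mulC mulmxA mulmxK // mulmxBl raddfB /= mulmxV //.
by rewrite mxtrace1 mxtrace_mulC opprB.
Qed.


Lemma entropy_above_tangent n (nu mu0 mu1 : gauss R n) (T0 T1 : affmap R n) :
  inBW nu -> inBW mu0 -> inBW mu1 -> is_ot_map nu mu0 T0 -> is_ot_map nu mu1 T1 ->
  entropy mu0 + gauss_inner nu (aff_comp (gradH mu0) T0) (aff_sub T1 T0)
    <= entropy mu1.
Proof.
move=> nu_BW mu0_BW mu1_BW ot0 ot1; rewrite gauss_inner_gradH_ot //.
have B0_unit := ot_map_unit mu0_BW ot0; have B1_unit := ot_map_unit mu1_BW ot1.
have /is_ot_mapP [psdB0 e0 _] := ot0; have /is_ot_mapP [psdB1 e1 _] := ot1.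
have psd_nu := spdmx_psd nu_BW; have nu_unit := spdmx_unit nu_BW.
have := ln_det_tangent psdB0 B0_unit psdB1 B1_unit.
rewrite /entropy -e0 -e1 !ln_det_congr //; lra.
Qed.

Lemma entropy_above_tangent_id n (mu0 mu1 : gauss R n) (T : affmap R n) :
  inBW mu0 -> inBW mu1 -> is_ot_map mu0 mu1 T ->
  entropy mu0 + gauss_inner mu0 (gradH mu0) (aff_sub T (aff_id R n))
    <= entropy mu1.
Proof.
move=> mu0_BW mu1_BW otT; rewrite -[gradH mu0]aff_compf1.
exact: entropy_above_tangent (is_ot_map_id mu0) otT.
Qed.

End Gaussians.

Section EntropyProx.
Variables (R : realType) (n : nat) (eta : R) (m : 'cV[R]_n) (Sigma : 'M[R]_n).
Hypotheses (eta_gt0 : 0 < eta) (Sigma_spd : spdmx Sigma).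

Let mu : gauss R n := (m, Sigma).
Let F (nu : gauss R n) := eta * entropy nu + 2^-1 * W2sq mu nu.

(* Expansion of [F] around the optimal map [A] to [N(m, A Sigma A)]: the
   first-order condition turns the cross term of [W2sq] into
   [eta (tr (A^-1 B) - n)], which dominates the entropy difference by the
   tangent inequality of [ln \det]. *)
Lemma prox_objective_excess (A : 'M[R]_n) :
  psdmx A -> spdmx (A *m Sigma *m A) -> (A - 1%:M) *m Sigma *m A = eta%:M ->
  forall nu : gauss R n, inBW nu ->
  F (m, A *m Sigma *m A) + 2^-1 * dotv (gmean nu - m) (gmean nu - m)
  + 2^-1 * \tr (((ot_map mu nu).1 - A) *m Sigma *m ((ot_map mu nu).1 - A))
  <= F nu.
Proof.
move=> psdA S1_spd Aopt nu nu_BW; have mu_BW : inBW mu := Sigma_spd.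
have otB := ot_mapP mu_BW nu_BW; have B_unit := ot_map_unit nu_BW otB.
have /is_ot_mapP [psdB BB _] := otB.
set B := (ot_map mu nu).1 in psdB BB B_unit *.
have S1_BW : inBW ((m, A *m Sigma *m A) : gauss R n) := S1_spd.
have A_ot : (ot_map mu (m, A *m Sigma *m A)).1 = A.
  by rewrite -(ot_map_linear_unique mu_BW S1_BW psdA).
have A_unit : A \in unitmx.
  by move: (spdmx_unit S1_spd); rewrite !unitmx_mul => /andP[/andP[]].
have Sigma_psd := spdmx_psd Sigma_spd; have Sigma_unit := spdmx_unit Sigma_spd.
have cross : \tr ((A - 1%:M) *m Sigma *m (B - A))
              = eta * (\tr (invmx A *m B) - n%:R).
  rewrite -[_ *m Sigma](mulmxK A_unit) Aopt mul_scalar_mx -!scalemxAl mxtraceZ.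
  by rewrite mulmxBr raddfB /= mulVmx // mxtrace1.
have symBA : (B - A)^T = B - A by rewrite linearB /= !psdmx_sym.
have symA1 : (A - 1%:M)^T = A - 1%:M by rewrite linearB /= trmx1 psdmx_sym.
have := ler_wpM2l (ltW eta_gt0) (ln_det_tangent psdA A_unit psdB B_unit).
rewrite /F !W2sqE // A_ot -/B /entropy -BB /gmean /gcov /= subrr dotv0l add0r.
have -> : B - 1%:M = (A - 1%:M) + (B - A) by rewrite [RHS]addrC subrKA.
rewrite !ln_det_congr // (mxtrace_sqrD_congr symA1 symBA (psdmx_sym Sigma_psd)).
by rewrite cross; lra.
Qed.

Let P := psd_sqrt (Sigma *m (Sigma + (4 * eta)%:M)).
Let Sigma1 := 2^-1 *: (Sigma + (2 * eta)%:M + P).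

(* [A := (I + Sigma^-1 P) / 2] solves both [A Sigma A = Sigma1] and the
   first-order condition, because [P] commutes with [Sigma]. *)
Lemma prox_sqrt_solution : exists A : 'M[R]_n,
  [/\ spdmx Sigma1, psdmx A, A *m Sigma *m A = Sigma1 &
      (A - 1%:M) *m Sigma *m A = eta%:M].
Proof.
have Sigma_psd := spdmx_psd Sigma_spd; have Sigma_unit := spdmx_unit Sigma_spd.
have eta_ge0 : 0 <= eta := ltW eta_gt0.
have SH : Sigma *m (Sigma + (4 * eta)%:M) = (Sigma + (4 * eta)%:M) *m Sigma.
  by rewrite mulmxDl mulmxDr scalar_mxC.
have psdH : psdmx (Sigma *m (Sigma + (4 * eta)%:M)).
  apply: psdmx_mul_comm SH => //.
  by apply: psdmxD => //; apply/psdmx_scalar/mulr_ge0.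
have [psdP PP _] := psd_sqrt_spec psdH.
have SP : Sigma *m P = P *m Sigma.
  by rewrite /P; apply: psd_sqrt_comm => //; rewrite -mulmxA SH.
have SiP : invmx Sigma *m P = P *m invmx Sigma.
  by rewrite -[P in RHS](mulKmx Sigma_unit) SP !mulmxA mulmxK.
pose Y := invmx Sigma *m P.
have psdY : psdmx Y by apply: psdmx_mul_comm => //; apply: psdmx_inv.
have SY : Sigma *m Y = P by rewrite mulmxA mulmxV // mul1mx.
have YS : Y *m Sigma = P by rewrite /Y SiP -mulmxA mulVmx // mulmx1.
have YP : Y *m P = Sigma + (4 * eta)%:M.
  by rewrite -mulmxA PP mulmxA mulVmx // mul1mx.
pose A := 2^-1 *: (1%:M + Y).
have SA : Sigma *m A = 2^-1 *: (Sigma + P).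
  by rewrite -scalemxAr mulmxDr mulmx1 SY.
have ASA : A *m Sigma *m A = Sigma1.
  rewrite -mulmxA SA /A -scalemxAl -scalemxAr scalerA mulmxDl mul1mx mulmxDr.
  rewrite YS YP; apply/matrixP => i j; rewrite !mxE.
  by case: (i == j); rewrite ?mulr1n ?mulr0n; lra.
exists A; split => //.
- apply: spdmxZ; rewrite ?invr_gt0 ?ltr0n //.
  by apply: spdmxDl => //; apply: spdmxDl => //; apply/psdmx_scalar/mulr_ge0.
- apply: psdmxZ; rewrite ?invr_ge0 ?ler0n //.
  by apply: psdmxD psdY; apply: psdmx_scalar.
- rewrite !mulmxBl mul1mx ASA SA /Sigma1.
  apply/matrixP => i j; rewrite !mxE.
  by case: (i == j); rewrite ?mulr1n ?mulr0n; lra.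
Qed.

Lemma entropy_prox_gauss :
  let Sigma1 := 2^-1 *: (Sigma + (2 * eta)%:M
                  + psd_sqrt (Sigma *m (Sigma + (4 * eta)%:M))) in
  let F := fun nu : gauss R n =>
             eta * entropy nu + 2^-1 * W2sq (m, Sigma) nu in
  inBW ((m, Sigma1) : gauss R n)
  /\ (forall nu : gauss R n, inBW nu -> F (m, Sigma1) <= F nu)
  /\ (forall nu : gauss R n, inBW nu ->
        (forall nu' : gauss R n, inBW nu' -> F nu <= F nu') ->
        nu = (m, Sigma1)).
Proof.
have [A [S1_spd psdA ASA Aopt]] := prox_sqrt_solution.
have := prox_objective_excess psdA; rewrite ASA => /(_ S1_spd Aopt) excess.
have mu_BW : inBW mu := Sigma_spd.
have S1_BW : inBW ((m, Sigma1) : gauss R n) := S1_spd.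
have gaps_ge0 (nu : gauss R n) : inBW nu ->
    [/\ ((ot_map mu nu).1 - A)^T = (ot_map mu nu).1 - A,
        0 <= dotv (gmean nu - m) (gmean nu - m) &
        0 <= \tr (((ot_map mu nu).1 - A) *m Sigma *m ((ot_map mu nu).1 - A))].
  move=> nu_BW; have /is_ot_mapP [psdB _ _] := ot_mapP mu_BW nu_BW.
  have symBA : ((ot_map mu nu).1 - A)^T = (ot_map mu nu).1 - A.
    by rewrite linearB /= (psdmx_sym psdB) (psdmx_sym psdA).
  split=> //; first exact: dotv_ge0.
  exact: mxtrace_congr_ge0 (spdmx_psd Sigma_spd) symBA.
move=> /=; split; first exact: S1_spd.
split=> [nu nu_BW | nu nu_BW nu_min].
  have [_ q1 q2] := gaps_ge0 nu nu_BW.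
  by have := excess nu nu_BW; rewrite /F; lra.
have [symBA q1 q2] := gaps_ge0 nu nu_BW; have := nu_min _ S1_BW.
have := excess nu nu_BW; rewrite /F => lower upper.
have : dotv (gmean nu - m) (gmean nu - m) == 0 by rewrite eq_le q1 andbT; lra.
rewrite dotv_eq0 subr_eq0 => /eqP m_eq.
have B_eq : (ot_map mu nu).1 = A.
  apply/eqP; rewrite -subr_eq0; apply/eqP/(mxtrace_congr_eq0 Sigma_spd symBA).
  by apply/eqP; rewrite eq_le q2 andbT; lra.
have /is_ot_mapP [_ BB _] := ot_mapP mu_BW nu_BW.
rewrite B_eq ASA in BB.
by apply: injective_projections; [exact: m_eq | exact: esym BB].
Qed.

End EntropyProx.

Theorem mainTheorem10 (R : realType) :
  (* (i) *)
  (forall (d : nat) (nu mu0 mu1 : gauss R d) (T0 T1 : affmap R d),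
     inBW nu -> inBW mu0 -> inBW mu1 ->
     is_ot_map nu mu0 T0 -> is_ot_map nu mu1 T1 ->
     entropy mu0 + gauss_inner nu (aff_comp (gradH mu0) T0) (aff_sub T1 T0)
       <= entropy mu1)
  /\
  (* (i), in particular (nu = mu0) *)
  (forall (d : nat) (mu0 mu1 : gauss R d) (T : affmap R d),
     inBW mu0 -> inBW mu1 -> is_ot_map mu0 mu1 T ->
     entropy mu0 + gauss_inner mu0 (gradH mu0) (aff_sub T (aff_id R d))
       <= entropy mu1)
  /\
  (* (ii) *)
  (forall (d : nat) (eta : R) (m : 'cV[R]_d) (Sigma : 'M[R]_d),
     0 < eta -> spdmx Sigma ->
     let Sigma1 := 2^-1 *: (Sigma + (2 * eta)%:M
                     + psd_sqrt (Sigma *m (Sigma + (4 * eta)%:M))) in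
     let F := fun nu : gauss R d =>
                eta * entropy nu + 2^-1 * W2sq (m, Sigma) nu in
     inBW ((m, Sigma1) : gauss R d)
     /\ (forall nu : gauss R d, inBW nu -> F (m, Sigma1) <= F nu)
     /\ (forall nu : gauss R d, inBW nu ->
           (forall nu' : gauss R d, inBW nu' -> F nu <= F nu') ->
           nu = (m, Sigma1))).
Proof.
split; first exact: entropy_above_tangent.
split; first exact: entropy_above_tangent_id.
exact: entropy_prox_gauss.
Qed.
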